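(* Let $\mathcal{P}$ be a finite poset and let $L=\mathfrak{g}(\mathcal{P})$ or $L=\mathfrak{g}_A(\mathcal{P})$. Then $b(L)=|Rel(\mathcal{P})|$.
   Context: All Lie algebras are over an algebraically closed field $\mathbf{k}$ of characteristic zero. A finite poset $(\mathcal{P},\preceq)$ has underlying set $\{1,\dots,n\}$, labeled so that $x\preceq y$ implies $x\le y$ as integers. Write $x\prec y$ if $x\preceq y$ and $x\neq y$; $Rel(\mathcal{P})$ is the set of strict relations of $\mathcal{P}$. The Lie poset algebra $\mathfrak{g}(\mathcal{P})$ is the Lie subalgebra of $\mathfrak{gl}(n,\mathbf{k})$ spanned by the matrix units $E_{i,j}$ with $i\preceq j$, with bracket $[X,Y]=XY-YX$; $\mathfrak{g}_A(\mathcal{P})$ is its subalgebra of trace-zero elements. The breadth of a Lie algebra $L$ is $b(L)=\max_{x\in L}\operatorname{rank}(\mathrm{ad}_x)$, where $\mathrm{ad}_x=[x,-]:L\to L$. *)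

From HB Require Import structures.
From mathcomp Require Import all_boot all_order all_algebra.
Set Implicit Arguments. Unset Strict Implicit. Unset Printing Implicit Defensive.
Import GRing.Theory.
Local Open Scope ring_scope.

(* A poset on {0,...,n-1} (i.e. {1,...,n} shifted), with a labeling
   compatible with the natural order. *)
Definition labeled_poset (n : nat) (le : rel 'I_n) : Prop :=
  [/\ reflexive le, antisymmetric le, transitive le &
      forall i j : 'I_n, le i j -> (i <= j)%N].

Definition Rel (n : nat) (le : rel 'I_n) : {set 'I_n * 'I_n} :=
  [set p | le p.1 p.2 && (p.1 != p.2)].

Definition lie_poset (k : fieldType) (n : nat) (le : rel 'I_n)
  : {vspace 'M[k]_n} :=
  <<[seq delta_mx p.1 p.2 | p <- enum [pred p : 'I_n * 'I_n | le p.1 p.2]]>>%VS.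

Definition trace_fun (k : fieldType) (n : nat) : 'Hom('M[k]_n, k^o) :=
  linfun (fun A : 'M[k]_n => (\tr A : k^o)).

Definition lie_poset_A (k : fieldType) (n : nat) (le : rel 'I_n)
  : {vspace 'M[k]_n} :=
  (lie_poset k le :&: lker (trace_fun k n))%VS.

Definition ad (k : fieldType) (n : nat) (x : 'M[k]_n) : 'End('M[k]_n) :=
  linfun (fun y : 'M[k]_n => x *m y - y *m x).

(* rank of ad_x : L -> L  (its image lies in L when x \in L and L is a
   Lie subalgebra) *)
Definition ad_rank (k : fieldType) (n : nat) (L : {vspace 'M[k]_n})
  (x : 'M[k]_n) : nat := \dim (ad x @: L)%VS.

Definition is_breadth (k : fieldType) (n : nat) (L : {vspace 'M[k]_n})
  (b : nat) : Prop :=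
  (exists2 x, x \in L & ad_rank L x = b) /\
  (forall x, x \in L -> (ad_rank L x <= b)%N).

From HB Require Import structures.
From mathcomp Require Import all_boot all_order all_algebra.
Set Implicit Arguments. Unset Strict Implicit. Unset Printing Implicit Defensive.
Import GRing.Theory.
Local Open Scope ring_scope.

(* Upper bound: both algebras consist of matrices supported on the relations
   i <= j of P.  For two such matrices the bracket [x, u] vanishes off the
   relations (by transitivity) and on the diagonal (by antisymmetry, the
   diagonal of xu and of ux coincide), so every image ad_x(u) lies in the span
   of the matrix units E_ij with i < j in P, a space of dimension |Rel(P)|.

   Lower bound: in characteristic zero the diagonal matrix D = diag(0,...,n-1)
   has pairwise distinct entries, and its traceless part x0 = D - (tr D / n) I
   lies in g_A(P).  Since ad_x0(E_ij) = (i - j) E_ij and E_ij is traceless for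
   i <> j, ad_x0 maps g_A(P) onto a space containing every E_ij with i < j,
   so rank(ad_x0) >= |Rel(P)| already on the smaller algebra g_A(P). *)

(* [x, -] as a linear map, so that the [linfun] defining [ad] computes. *)
Definition commutator (k : fieldType) (n : nat) (x y : 'M[k]_n) :=
  x *m y - y *m x.

Fact commutator_is_linear (k : fieldType) (n : nat) (x : 'M[k]_n) :
  linear (commutator x).
Proof.
move=> a y z; rewrite /commutator mulmxDr mulmxDl -scalemxAr -scalemxAl.
by rewrite scalerBr opprD addrACA.
Qed.

HB.instance Definition _ (k : fieldType) (n : nat) (x : 'M[k]_n) :=
  GRing.isLinear.Build k 'M[k]_n 'M[k]_n _ (commutator x)
    (commutator_is_linear x).

Lemma adE (k : fieldType) (n : nat) (x y : 'M[k]_n) : ad x y = x *m y - y *m x.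
Proof. exact: (lfunE (commutator x) y). Qed.

Section MatrixUnits.
Variables (k : fieldType) (n : nat).

Definition units_span (s : seq ('I_n * 'I_n)) : {vspace 'M[k]_n} :=
  <<[seq delta_mx p.1 p.2 | p <- s]>>%VS.

Lemma units_spanP (s : seq ('I_n * 'I_n)) (A : 'M[k]_n) :
  A \in units_span s <-> (forall i j, (i, j) \notin s -> A i j = 0).
Proof.
split.
  elim: s A => [|p s IH] A; rewrite /units_span /=.
    by rewrite span_nil memv0 => /eqP -> i j _; rewrite mxE.
  rewrite span_cons => /memv_addP [a /vlineP [c ->] [b bs ->]] i j.
  rewrite inE negb_or => /andP[ne nin].
  rewrite !mxE (IH b bs i j nin) addr0.
  by case: p ne => p1 p2 /=; rewrite xpair_eqE => /negbTE ->; rewrite mulr0.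
move=> A0; rewrite [A]matrix_sum_delta; apply: memv_suml => i _.
apply: memv_suml => j _; have [ijs | ijNs] := boolP ((i, j) \in s).
  by apply/memvZ/memv_span/mapP; exists (i, j).
by rewrite A0 // scale0r mem0v.
Qed.

Lemma dim_units_span (s : seq ('I_n * 'I_n)) :
  uniq s -> \dim (units_span s) = size s.
Proof.
move=> us; rewrite -(size_map (fun p => delta_mx p.1 p.2 : 'M[k]_n)).
apply/eqP; change (free [seq delta_mx p.1 p.2 : 'M[k]_n | p <- s]).
elim: s us => [|p s IH] /=; first by rewrite nil_free.
case/andP => ps us; rewrite free_cons IH // andbT.
apply/negP => /units_spanP /(_ p.1 p.2).
rewrite -surjective_pairing => /(_ ps) /eqP.
by rewrite mxE !eqxx oner_eq0.
Qed.

End MatrixUnits.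

Section PosetAlgebra.
Variables (k : fieldType) (n : nat) (le : rel 'I_n).

Lemma lie_posetP (A : 'M[k]_n) :
  A \in lie_poset k le <-> (forall i j, ~~ le i j -> A i j = 0).
Proof.
rewrite -[lie_poset k le]/(units_span _ _).
split=> [/units_spanP A0 i j lij | A0]; first by apply: A0; rewrite mem_enum.
by apply/units_spanP => i j; rewrite mem_enum; apply: A0.
Qed.

Definition strict_span : {vspace 'M[k]_n} := units_span k (enum (Rel le)).

Lemma dim_strict_span : \dim strict_span = #|Rel le|.
Proof. by rewrite dim_units_span ?enum_uniq // -cardE. Qed.

Lemma poset_product_term (x u : 'M[k]_n) i l j :
  x \in lie_poset k le -> u \in lie_poset k le ->
  ~~ (le i l && le l j) -> x i l * u l j = 0.
Proof.
move=> /lie_posetP x0 /lie_posetP u0; have [il /= lj | /x0 -> _] := boolP (le i l).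
  by rewrite (u0 _ _ lj) mulr0.
by rewrite mul0r.
Qed.

Hypotheses (le_anti : antisymmetric le) (le_trans : transitive le).

Lemma bracket_strict (x u : 'M[k]_n) :
  x \in lie_poset k le -> u \in lie_poset k le ->
  x *m u - u *m x \in strict_span.
Proof.
move=> xL uL; apply/units_spanP => i j.
rewrite mem_enum inE /= negb_and negbK !mxE.
have [lij /eqP <- | Nlij _] := boolP (le i j); last first.
  rewrite !big1 ?subrr // => l _; apply: poset_product_term => //;
  by apply: contra Nlij => /andP[il lj]; apply: le_trans lj.
have only_diag (a b : 'M[k]_n) : a \in lie_poset k le -> b \in lie_poset k le ->
    \sum_l a i l * b l i = a i i * b i i.
  move=> aL bL; rewrite (bigD1 i) //= big1 ?addr0 // => l li.
  apply: poset_product_term => //; apply: contra li => ilLli.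
  by rewrite (le_anti ilLli).
by rewrite !only_diag // mulrC subrr.
Qed.

Lemma ad_rank_le_Rel (U : {vspace 'M[k]_n}) (x : 'M[k]_n) :
  (U <= lie_poset k le)%VS -> x \in lie_poset k le ->
  (ad_rank U x <= #|Rel le|)%N.
Proof.
move=> /subvP UL xL; rewrite /ad_rank -dim_strict_span; apply: dimvS.
by apply/subvP => _ /memv_imgP [u /UL uL ->]; rewrite adE bracket_strict.
Qed.

End PosetAlgebra.

Section DiagonalAd.
Variables (k : fieldType) (n : nat).

Lemma ad_subr_scalar (x y : 'M[k]_n) (c : k) : ad (x - c%:M) y = ad x y.
Proof.
rewrite !adE mulmxBl mulmxBr mul_scalar_mx mul_mx_scalar.
by rewrite opprB addrA subrK.
Qed.

Lemma ad_diag_delta (d : 'rV[k]_n) i j :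
  ad (diag_mx d) (delta_mx i j) = (d 0 i - d 0 j) *: delta_mx i j.
Proof.
rewrite adE mul_diag_mx mul_mx_diag; apply/matrixP => a b; rewrite !mxE.
have [-> | ai] := eqVneq a i; have [-> | bj] := eqVneq b j;
  by rewrite /= ?mulr1 ?mul1r ?mulr0 ?mul0r ?subrr.
Qed.

Lemma mxtrace_delta_offdiag i j : i != j -> \tr (delta_mx i j : 'M[k]_n) = 0.
Proof.
move=> ij; rewrite /mxtrace big1 // => l _; rewrite mxE.
by have [-> | //] := eqVneq l i; rewrite (negbTE ij) andbF.
Qed.

Hypothesis char0 : [pchar k] =i pred0.

Lemma mxtrace_traceless_part (A : 'M[k]_n) : \tr (A - (\tr A / n%:R)%:M) = 0.
Proof.
have [n0 | n_gt0] := posnP n.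
  by rewrite /mxtrace big1 // => i; have := ltn_ord i; rewrite {2}n0.
rewrite linearB /= mxtrace_scalar -(mulr_natr (\tr A / n%:R)) divfK ?subrr //.
by rewrite ((pcharf0P k).1 char0) -lt0n.
Qed.

Lemma natr_inj_char0 (a b : nat) : (a%:R == b%:R :> k) = (a == b).
Proof.
have nat0 := (pcharf0P k).1 char0.
have [ab | /ltnW ba] := leqP a b.
  by rewrite -subr_eq0 -opprB -natrB // oppr_eq0 nat0 subn_eq0 eqn_leq ab.
by rewrite -subr_eq0 -natrB // nat0 subn_eq0 eqn_leq ba andbT.
Qed.

End DiagonalAd.

Lemma regular_element (k : fieldType) (char0 : [pchar k] =i pred0)
  (n : nat) (le : rel 'I_n) (hP : labeled_poset le) :
  exists2 x0, x0 \in lie_poset_A k le &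
    ad_rank (lie_poset_A k le) x0 = #|Rel le|.
Proof.
have [le_refl le_anti le_trans _] := hP.
pose D : 'M[k]_n := diag_mx (\row_i (i : nat)%:R).
pose x0 := D - (\tr D / n%:R)%:M.
have x0L : x0 \in lie_poset k le.
  apply/lie_posetP => i j; apply: contraNeq; rewrite !mxE.
  by have [-> | ij] := eqVneq i j; rewrite ?le_refl // !mulr0n subrr eqxx.
have x0A : x0 \in lie_poset_A k le.
  by rewrite memv_cap x0L memv_ker lfunE /= mxtrace_traceless_part.
exists x0 => //; apply/eqP; rewrite eqn_leq ad_rank_le_Rel ?capvSl //=.
rewrite /ad_rank -(dim_strict_span k le); apply/dimvS/span_subvP => v /mapP [[i j]].
rewrite mem_enum inE /= => /andP[lij ij] ->.
have gap_neq0 : (i : nat)%:R - (j : nat)%:R != 0 :> k.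
  by rewrite subr_eq0 natr_inj_char0.
apply/memv_imgP; exists (((i : nat)%:R - (j : nat)%:R)^-1 *: delta_mx i j).
  rewrite memv_cap memv_ker lfunE /= mxtraceZ mxtrace_delta_offdiag // mulr0.
  rewrite eqxx andbT; apply/memvZ/lie_posetP => a b; rewrite mxE.
  by apply: contraNeq => /eqP; case: (a =P i) => // -> /=; case: (b =P j) => // ->.
rewrite linearZ /= ad_subr_scalar ad_diag_delta !mxE scalerA.
by rewrite mulVf // scale1r.
Qed.

Theorem theorem1 (k : closedFieldType) (hchar : ([pchar k]%R =i pred0))
  (n : nat) (le : rel 'I_n) (hP : labeled_poset le) :
  is_breadth (lie_poset k le) #|Rel le| /\
  is_breadth (lie_poset_A k le) #|Rel le|.
Proof.
have [_ le_anti le_trans _] := hP.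
have sub_gA : (lie_poset_A k le <= lie_poset k le)%VS by exact: capvSl.
have [x0 x0A rank_x0] := regular_element hchar hP.
have x0L : x0 \in lie_poset k le by apply: (subvP sub_gA).
split; split.
- exists x0 => //; apply/eqP; rewrite eqn_leq ad_rank_le_Rel //= -{1}rank_x0.
  exact/dimvS/limgS.
- by move=> x xL; apply: ad_rank_le_Rel.
- by exists x0.
- by move=> x xA; apply: ad_rank_le_Rel => //; apply: (subvP sub_gA).
Qed.
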